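(* Let $X\sim\mathrm{ECR}(\beta,\lambda)$. Then $$\mathbb E(\log X)=\log\lambda+\tfrac12\,\Phi\!\left(\tfrac12;1,\beta\right)+\psi(1+\beta)+\gamma-\frac1\beta.$$
   Context: The exponentiated Cauchy–Rayleigh distribution $\mathrm{ECR}(\beta,\lambda)$, with shape parameter $\beta>0$ and scale parameter $\lambda>0$, is the distribution on $(0,\infty)$ with cdf $F(x)=\left(1-\frac{\lambda}{\sqrt{\lambda^2+x^2}}\right)^{\beta}$ for $x>0$. $\Phi(z;s,a)=\sum_{n=0}^\infty \frac{z^n}{(n+a)^s}$ is the Lerch transcendent, $\psi=\Gamma'/\Gamma$ is the digamma function, and $\gamma=0.57721\ldots$ is the Euler–Mascheroni constant. *)

From Stdlib Require Import Reals.
Open Scope R_scope.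

Definition improper_int_0_inf (f : R -> R) (l : R) : Prop :=
  forall eps : R, 0 < eps ->
    exists d M : R, 0 < d /\
      forall a b : R, 0 < a -> a < d -> M < b ->
        exists pr : Riemann_integrable f a b, Rabs (RiemannInt pr - l) < eps.

Definition ECR_cdf (beta lambda x : R) : R :=
  Rpower (1 - lambda / sqrt (lambda ^ 2 + x ^ 2)) beta.

Definition is_Gamma (G : R -> R) : Prop :=
  forall s : R, 0 < s ->
    improper_int_0_inf (fun t => Rpower t (s - 1) * exp (- t)) (G s).

Definition is_euler_gamma (g : R) : Prop :=
  Un_cv (fun n => sum_f_R0 (fun k => / INR (S k)) n - ln (INR (S n))) g.

Definition is_Lerch (z s a v : R) : Prop :=
  infinite_sum (fun n => z ^ n / Rpower (INR n + a) s) v.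

(* Substituting t = 1 - lambda / sqrt (lambda^2 + x^2), the Cauchy-Rayleigh cdf, turns E(log X)
   into int_0^1 beta t^(beta-1) ln x(t) dt with
   ln x(t) = ln lambda + (ln t + ln (2 - t)) / 2 - ln (1 - t).
   Since P(y) = sum_n y^n / (n + 1 + beta) satisfies (y^(1+beta) P(y))' = y^beta / (1 - y),
   integration by parts gives an explicit antiderivative. It vanishes at t = 0; at t = 1 the
   divergent -ln (1 - t) - t P(t) equals t Q(t), Q(y) = sum_n (1/(n+1) - 1/(n+1+beta)) y^n, and
   Abel's theorem gives the limit ln lambda - 1/(2 beta) + P(1/2)/4 + Q(1), where
   P(1/2)/2 = Phi(1/2; 1, beta) - 1/beta. Finally Q(1) = psi(1+beta) + gamma, because the
   log-convexity of Gamma (Hoelder on its integral) squeezes psi(1+beta) + sum_(k<n) 1/(1+beta+k)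
   between ln (beta + n) and ln (1 + beta + n). *)

From Stdlib Require Import Reals Lra.
From Coquelicot Require Import Coquelicot.
Open Scope R_scope.

Lemma at_right_0_pos : at_right 0 (fun a => 0 < a).
Proof. exists (mkposreal 1 Rlt_0_1). now intros. Qed.

Lemma at_left_1_unit : at_left 1 (fun t => 0 < t < 1).
Proof.
  exists (mkposreal 1 Rlt_0_1). intros t Ht Hlt.
  change (Rabs (t - 1) < 1) in Ht. apply Rabs_def2 in Ht. lra.
Qed.

Lemma locally_pos (x : R) : 0 < x -> locally x (fun y => 0 < y).
Proof.
  intros Hx. exists (mkposreal x Hx). intros y Hy.
  change (Rabs (y - x) < x) in Hy. apply Rabs_def2 in Hy. lra.
Qed.

Lemma filterlim_Rmult_locally {T : Type} {F : (T -> Prop) -> Prop} {FF : Filter F}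
  (f g : T -> R) (a b : R) :
  filterlim f F (locally a) -> filterlim g F (locally b) ->
  filterlim (fun x => f x * g x) F (locally (a * b)).
Proof. intros Hf Hg. eapply filterlim_comp_2; [exact Hf | exact Hg | exact (filterlim_mult a b)]. Qed.

Lemma filterlim_Rplus_locally {T : Type} {F : (T -> Prop) -> Prop} {FF : Filter F}
  (f g : T -> R) (a b : R) :
  filterlim f F (locally a) -> filterlim g F (locally b) ->
  filterlim (fun x => f x + g x) F (locally (a + b)).
Proof. intros Hf Hg. eapply filterlim_comp_2; [exact Hf | exact Hg | exact (filterlim_plus a b)]. Qed.

Lemma filterlim_within_continuous (D : R -> Prop) (f : R -> R) (x : R) :
  continuous f x -> filterlim f (within D (locally x)) (locally (f x)).
Proof. intros Hc. exact (filterlim_filter_le_1 f (filter_le_within D) Hc). Qed.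

Lemma filterlim_locally_within {T : Type} {F : (T -> Prop) -> Prop} {FF : Filter F}
  (f : T -> R) (D : R -> Prop) (x : R) :
  filterlim f F (locally x) -> F (fun t => D (f t)) -> filterlim f F (within D (locally x)).
Proof.
  intros Hf HD P HP. unfold filtermap.
  apply (filter_imp (fun t => (D (f t) -> P (f t)) /\ D (f t))); [tauto|].
  apply filter_and; [exact (Hf _ HP) | exact HD].
Qed.

Lemma filterlim_exp_m_infty {T : Type} {F : (T -> Prop) -> Prop} {FF : Filter F} (u : T -> R) :
  filterlim u F (Rbar_locally m_infty) -> filterlim (fun x => exp (u x)) F (locally 0).
Proof. intros Hu. eapply filterlim_comp; [exact Hu | exact is_lim_exp_m]. Qed.

Lemma filterlim_scal_ln_0 (s : R) :
  0 < s -> filterlim (fun t => s * ln t) (at_right 0) (Rbar_locally m_infty).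
Proof.
  intros Hs.
  replace (Rbar_locally m_infty) with (Rbar_locally (Rbar_mult s m_infty)).
  - eapply filterlim_comp; [exact is_lim_ln_0 | apply filterlim_Rbar_mult_l].
  - simpl. destruct (Rle_dec 0 s) as [H|H]; [|lra].
    destruct (Rle_lt_or_eq_dec 0 s H); [reflexivity | lra].
Qed.

Lemma filterlim_Rpower_0 (s : R) :
  0 < s -> filterlim (fun t => Rpower t s) (at_right 0) (locally 0).
Proof.
  intros Hs. eapply filterlim_comp; [exact (filterlim_scal_ln_0 s Hs) | exact is_lim_exp_m].
Qed.

Lemma filterlim_Rpower_mul_ln_0 (s : R) :
  0 < s -> filterlim (fun t => Rpower t s * ln t) (at_right 0) (locally 0).
Proof.
  intros Hs.
  apply (filterlim_ext (fun t => scal (/ s) ((s * ln t) * exp (s * ln t)))).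
  { intros t. unfold Rpower, scal; simpl; unfold mult; simpl. field. lra. }
  replace (locally 0) with (locally (scal (/ s) 0))
    by (f_equal; unfold scal; simpl; unfold mult; simpl; ring).
  eapply filterlim_comp; [| exact (filterlim_scal_r (K:=R_AbsRing) (V:=R_NormedModule) (/ s) 0)].
  exact (filterlim_comp _ _ _ _ (fun u => u * exp u) _ _ _ (filterlim_scal_ln_0 s Hs) is_lim_mul_exp_m).
Qed.

(** * Improper integrals on (0, +oo) *)

Notation is_RInt_0_oo f l := (is_RInt_gen f (at_right 0) (Rbar_locally p_infty) l).

Lemma eventually_0_oo_pos :
  filter_prod (at_right 0) (Rbar_locally p_infty)
    (fun ab => forall x, Rmin (fst ab) (snd ab) <= x <= Rmax (fst ab) (snd ab) -> 0 < x).
Proof.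
  apply (Filter_prod _ _ _ (fun a => 0 < a) (fun b => 0 < b)).
  - exact at_right_0_pos.
  - now exists 0.
  - intros a b Ha Hb x [Hx _]; simpl in Hx.
    unfold Rmin in Hx; destruct (Rle_dec a b); lra.
Qed.

Lemma eventually_0_oo_1_2 :
  filter_prod (at_right 0) (Rbar_locally p_infty) (fun ab => 0 < fst ab < 1 /\ 2 < snd ab).
Proof.
  apply (Filter_prod _ _ _ (fun a => 0 < a < 1) (fun b => 2 < b)).
  - exists (mkposreal 1 Rlt_0_1). intros a Ha Hpos.
    change (Rabs (a - 0) < 1) in Ha. rewrite Rminus_0_r, Rabs_pos_eq in Ha; lra.
  - now exists 2.
  - now intros a b Ha Hb.
Qed.

Lemma is_RInt_0_oo_improper_int_0_inf (f : R -> R) (l : R) :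
  is_RInt_0_oo f l <-> improper_int_0_inf f l.
Proof.
  split.
  - intros H eps Heps.
    destruct (proj1 (filterlimi_locally _ l) H (mkposreal eps Heps))
      as [Q R [d Hd] [M HM] HQR].
    exists d, M; split; [apply cond_pos|].
    intros a b Ha Had Hb.
    destruct (HQR a b) as [z [Hz Hball]].
    + apply Hd; [|exact Ha]. change (Rabs (a - 0) < d). rewrite Rminus_0_r, Rabs_pos_eq; lra.
    + now apply HM.
    + exists (ex_RInt_Reals_0 f a b (ex_intro _ z Hz)).
      rewrite <- RInt_Reals, (is_RInt_unique f a b z Hz). exact Hball.
  - intros H.
    apply (filterlimi_locally _ l). intros eps.
    destruct (H eps (cond_pos eps)) as [d [M [Hd HdM]]].
    apply (Filter_prod _ _ _ (fun a => 0 < a /\ a < d) (fun b => M < b)).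
    + exists (mkposreal d Hd). intros a Ha Hpos; split; [exact Hpos|].
      change (Rabs (a - 0) < d) in Ha. rewrite Rminus_0_r, Rabs_pos_eq in Ha; lra.
    + now exists M.
    + intros a b [Ha Had] Hb. destruct (HdM a b Ha Had Hb) as [pr Hpr].
      exists (RInt f a b); split.
      * apply (RInt_correct (V:=R_CompleteNormedModule)), (ex_RInt_Reals_1 _ _ _ pr).
      * rewrite (RInt_Reals f a b pr). exact Hpr.
Qed.

Lemma is_RInt_0_oo_derive (F f : R -> R) (la lb : R) :
  (forall x, 0 < x -> is_derive F x (f x)) ->
  (forall x, 0 < x -> continuous f x) ->
  filterlim F (at_right 0) (locally la) ->
  filterlim F (Rbar_locally p_infty) (locally lb) ->
  is_RInt_0_oo f (lb - la).
Proof.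
  intros HF Hf Ha Hb.
  assert (Hder : forall x, 0 < x -> Derive F x = f x) by (intros; now apply is_derive_unique, HF).
  apply (is_RInt_gen_ext (Derive F)).
  { generalize eventually_0_oo_pos. apply filter_imp.
    intros ab Hab x Hx. apply Hder, Hab. lra. }
  apply is_RInt_gen_Derive; auto.
  - generalize eventually_0_oo_pos. apply filter_imp.
    intros ab Hab x Hx. eexists. apply HF, Hab, Hx.
  - generalize eventually_0_oo_pos. apply filter_imp.
    intros ab Hab x Hx. apply (continuous_ext_loc _ f).
    + generalize (locally_pos x (Hab x Hx)). apply filter_imp. intros y Hy. now rewrite Hder.
    + apply Hf, Hab, Hx.
Qed.

Lemma is_RInt_0_oo_le (f g : R -> R) (lf lg : R) :
  (forall x, 0 < x -> 0 <= f x <= g x) ->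
  is_RInt_0_oo f lf -> is_RInt_0_oo g lg -> lf <= lg.
Proof.
  intros Hfg Hf Hg.
  eapply Rle_trans; [apply Rle_abs|].
  apply (RInt_gen_norm (Fa := at_right 0) (Fb := Rbar_locally p_infty) f g lf lg); auto.
  - generalize eventually_0_oo_1_2. apply filter_imp. intros ab Hab; lra.
  - generalize eventually_0_oo_1_2. apply filter_imp. intros [a b] Hab x Hx; simpl in *.
    pose proof (Hfg x ltac:(lra)). change (Rabs (f x) <= g x). rewrite Rabs_pos_eq; lra.
Qed.

Lemma is_RInt_0_oo_unique (f : R -> R) (l1 l2 : R) :
  is_RInt_0_oo f l1 -> is_RInt_0_oo f l2 -> l1 = l2.
Proof.
  apply filterlimi_locally_unique, filter_forall. intros ab y1 y2 H1 H2.
  apply (is_RInt_unique (V:=R_CompleteNormedModule)) in H1, H2. congruence.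
Qed.

Lemma is_RInt_0_oo_gt0 (f : R -> R) (l : R) :
  (forall x, 0 < x -> 0 < f x) -> (forall x, 0 < x -> continuous f x) ->
  is_RInt_0_oo f l -> 0 < l.
Proof.
  intros Hpos Hcont Hl.
  assert (Hex : forall a b, 0 < a -> 0 < b -> ex_RInt f a b).
  { intros a b Ha Hb. apply (ex_RInt_continuous (V:=R_CompleteNormedModule)).
    intros x [Hx _]. apply Hcont. unfold Rmin in Hx; destruct (Rle_dec a b); lra. }
  assert (Hm : 0 < RInt f 1 2).
  { apply RInt_gt_0; try lra; intros; [apply Hpos | apply Hcont]; lra. }
  pose proof (proj1 (filterlimi_locally _ l) Hl (mkposreal _ (Rdiv_lt_0_compat _ 2 Hm Rlt_0_2)))
    as Hnear.
  destruct (filter_ex _ (filter_and _ _ Hnear eventually_0_oo_1_2))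
    as [[a b] [[z [Hz Hball]] [Ha Hb]]]; simpl in *.
  change (Rabs (z - l) < RInt f 1 2 / 2) in Hball. apply Rabs_def2 in Hball.
  assert (Hsplit : z = RInt f a 1 + RInt f 1 2 + RInt f 2 b).
  { apply (is_RInt_unique (V:=R_CompleteNormedModule)) in Hz.
    rewrite <- Hz, <- (RInt_Chasles f a 1 b), <- (RInt_Chasles f 1 2 b) by (apply Hex; lra).
    unfold plus; simpl; ring. }
  assert (0 <= RInt f a 1) by (apply RInt_ge_0; [lra | apply Hex; lra | intros; left; apply Hpos; lra]).
  assert (0 <= RInt f 2 b) by (apply RInt_ge_0; [lra | apply Hex; lra | intros; left; apply Hpos; lra]).
  lra.
Qed.

(** * The Gamma function *)

Definition Gamma_integrand (s t : R) : R := Rpower t (s - 1) * exp (- t).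

Lemma Gamma_integrand_pos (s t : R) : 0 < Gamma_integrand s t.
Proof. apply Rmult_lt_0_compat; apply exp_pos. Qed.

Lemma Gamma_integrand_continuous (s t : R) : 0 < t -> continuous (Gamma_integrand s) t.
Proof.
  intros Ht. apply (ex_derive_continuous (V:=R_NormedModule)).
  unfold Gamma_integrand, Rpower. auto_derive. exact Ht.
Qed.

Lemma is_Gamma_is_RInt (G : R -> R) (s : R) :
  is_Gamma G -> 0 < s -> is_RInt_0_oo (Gamma_integrand s) (G s).
Proof. intros HG Hs. apply is_RInt_0_oo_improper_int_0_inf, HG, Hs. Qed.

Lemma Gamma_pos (G : R -> R) (s : R) : is_Gamma G -> 0 < s -> 0 < G s.
Proof.
  intros HG Hs. apply (is_RInt_0_oo_gt0 (Gamma_integrand s)).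
  - intros; apply Gamma_integrand_pos.
  - apply Gamma_integrand_continuous.
  - now apply is_Gamma_is_RInt.
Qed.

Lemma filterlim_Rpower_exp_0 (s : R) :
  0 < s -> filterlim (fun t => Rpower t s * exp (- t)) (at_right 0) (locally 0).
Proof.
  intros Hs. apply (filterlim_ext (fun t => exp (s * ln t + - t))).
  { intros t. unfold Rpower. now rewrite exp_plus. }
  apply filterlim_exp_m_infty.
  apply (filterlim_le_m_infty (fun t => s * ln t)).
  - generalize at_right_0_pos. apply filter_imp. intros; lra.
  - now apply filterlim_scal_ln_0.
Qed.

Lemma filterlim_Rpower_exp_p_infty (s : R) :
  0 < s -> filterlim (fun t => Rpower t s * exp (- t)) (Rbar_locally p_infty) (locally 0).
Proof.
  intros Hs. apply (filterlim_ext_loc (fun t => exp (s * ln t + - t))).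
  { exists 0. intros t Ht. unfold Rpower. now rewrite exp_plus. }
  apply filterlim_exp_m_infty.
  (* [ln y <= y - 1] at [y = t / (2 s)] gives [s ln t - t <= s ln (2 s) - t / 2] *)
  apply (filterlim_le_m_infty (fun t => s * ln (2 * s) - t / 2)).
  - exists 0. intros t Ht.
    assert (Hy : 0 < t / (2 * s)) by (apply Rdiv_lt_0_compat; lra).
    pose proof (exp_ineq1_le (ln (t / (2 * s)))) as Hln.
    rewrite exp_ln, ln_div in Hln by lra.
    assert (Hs_ln : s * ln t <= s * (ln (2 * s) + t / (2 * s) - 1)) by (apply Rmult_le_compat_l; lra).
    replace (s * (ln (2 * s) + t / (2 * s) - 1)) with (s * ln (2 * s) + t / 2 - s) in Hs_ln
      by (field; lra).
    lra.
  - intros P [M HM]. exists (2 * (s * ln (2 * s) - M)). intros t Ht. apply HM. lra.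
Qed.

Lemma is_derive_Rpower_exp (s t : R) :
  0 < t -> is_derive (fun t => Rpower t s * exp (- t)) t
             (s * Gamma_integrand s t - Gamma_integrand (s + 1) t).
Proof.
  intros Ht. unfold Gamma_integrand, Rpower. auto_derive; [exact Ht|].
  replace (s + 1 - 1) with s by ring.
  replace ((s - 1) * ln t) with (s * ln t + - ln t) by ring.
  rewrite exp_plus, (exp_Ropp (ln t)), exp_ln by exact Ht. field. lra.
Qed.

Lemma Gamma_succ (G : R -> R) (s : R) : is_Gamma G -> 0 < s -> G (s + 1) = s * G s.
Proof.
  intros HG Hs.
  assert (Hbd : is_RInt_0_oo (fun t => s * Gamma_integrand s t - Gamma_integrand (s + 1) t) (0 - 0)).
  { apply (is_RInt_0_oo_derive (fun t => Rpower t s * exp (- t))).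
    - intros; now apply is_derive_Rpower_exp.
    - intros t Ht. apply (ex_derive_continuous (V:=R_NormedModule)).
      unfold Gamma_integrand, Rpower. auto_derive. repeat split; lra.
    - now apply filterlim_Rpower_exp_0.
    - now apply filterlim_Rpower_exp_p_infty. }
  pose proof (is_RInt_gen_minus _ _ _ _
    (is_RInt_gen_scal _ s _ (is_Gamma_is_RInt G s HG Hs)) Hbd) as Hsucc.
  apply (is_RInt_0_oo_unique (Gamma_integrand (s + 1))).
  - apply is_Gamma_is_RInt; [exact HG | lra].
  - replace (s * G s) with (minus (scal s (G s)) (0 - 0))
      by (unfold minus, plus, opp, scal; simpl; unfold mult; simpl; ring).
    revert Hsucc. apply is_RInt_gen_ext, filter_forall. intros ab t _.
    unfold minus, plus, opp, scal; simpl; unfold mult; simpl. ring.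
Qed.

Lemma exp_convex (th p q : R) :
  0 <= th <= 1 -> exp (th * p + (1 - th) * q) <= th * exp p + (1 - th) * exp q.
Proof.
  intros Hth. set (r := th * p + (1 - th) * q).
  assert (Ep : exp p = exp r * exp (p - r)) by (rewrite <- exp_plus; f_equal; ring).
  assert (Eq : exp q = exp r * exp (q - r)) by (rewrite <- exp_plus; f_equal; ring).
  (* tangent line of [exp] at [r] *)
  pose proof (exp_ineq1_le (p - r)) as Hp. pose proof (exp_ineq1_le (q - r)) as Hq.
  assert (Htan : 1 <= th * exp (p - r) + (1 - th) * exp (q - r)).
  { assert (th * (1 + (p - r)) <= th * exp (p - r)) by (apply Rmult_le_compat_l; lra).
    assert ((1 - th) * (1 + (q - r)) <= (1 - th) * exp (q - r)) by (apply Rmult_le_compat_l; lra).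
    replace 1 with (th * (1 + (p - r)) + (1 - th) * (1 + (q - r))) at 1 by (unfold r; ring).
    lra. }
  rewrite Ep, Eq. pose proof (exp_pos r).
  replace (th * (exp r * exp (p - r)) + (1 - th) * (exp r * exp (q - r)))
    with (exp r * (th * exp (p - r) + (1 - th) * exp (q - r))) by ring.
  fold r. rewrite <- (Rmult_1_r (exp r)) at 1. apply Rmult_le_compat_l; lra.
Qed.

Lemma ln_Gamma_convex (G : R -> R) (a b th : R) :
  is_Gamma G -> 0 < a -> 0 < b -> 0 <= th <= 1 ->
  ln (G (th * a + (1 - th) * b)) <= th * ln (G a) + (1 - th) * ln (G b).
Proof.
  intros HG Ha Hb Hth.
  set (c := th * a + (1 - th) * b). assert (Hc : 0 < c) by (unfold c; nra).
  set (K := th * ln (G a) + (1 - th) * ln (G b)).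
  pose proof (Gamma_pos G a HG Ha). pose proof (Gamma_pos G b HG Hb).
  (* pointwise convexity of [exp] gives
     [Gamma_integrand c <= ca Gamma_integrand a + cb Gamma_integrand b],
     with weights making the right-hand side integrate to [exp K] *)
  set (ca := th * exp K / G a). set (cb := (1 - th) * exp K / G b).
  assert (Hmix : is_RInt_0_oo (fun t => ca * Gamma_integrand a t + cb * Gamma_integrand b t)
                   (ca * G a + cb * G b)).
  { exact (is_RInt_gen_plus _ _ _ _
      (is_RInt_gen_scal _ ca _ (is_Gamma_is_RInt G a HG Ha))
      (is_RInt_gen_scal _ cb _ (is_Gamma_is_RInt G b HG Hb))). }
  replace (ca * G a + cb * G b) with (exp K) in Hmix by (unfold ca, cb; field; lra).
  rewrite <- (ln_exp K). apply ln_le; [now apply Gamma_pos|].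
  refine (is_RInt_0_oo_le _ _ _ _ _ (is_Gamma_is_RInt G c HG Hc) Hmix).
  intros t Ht. split; [left; apply Gamma_integrand_pos|].
  unfold Gamma_integrand, Rpower. rewrite <- !exp_plus.
  replace ((c - 1) * ln t + - t) with
    (th * (K - ln (G a) + ((a - 1) * ln t + - t)) + (1 - th) * (K - ln (G b) + ((b - 1) * ln t + - t)))
    by (unfold K, c; ring).
  eapply Rle_trans; [now apply exp_convex|].
  right. unfold ca, cb, Rminus.
  rewrite !exp_plus, (exp_Ropp (ln (G a))), (exp_Ropp (ln (G b))), !exp_ln by assumption.
  field. lra.
Qed.

Fixpoint harmonic_shift (x : R) (n : nat) : R :=
  match n with O => 0 | S m => harmonic_shift x m + / (x + INR m) end.

Fixpoint ln_pochhammer (x : R) (n : nat) : R :=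
  match n with O => 0 | S m => ln_pochhammer x m + ln (x + INR m) end.

Lemma ln_Gamma_add_nat (G : R -> R) (z : R) (n : nat) :
  is_Gamma G -> 0 < z -> ln (G (z + INR n)) = ln (G z) + ln_pochhammer z n.
Proof.
  intros HG Hz. induction n as [|n IH]; simpl ln_pochhammer.
  - rewrite Rplus_0_r. ring.
  - pose proof (pos_INR n). rewrite S_INR, <- Rplus_assoc, Gamma_succ by (auto; lra).
    rewrite ln_mult, IH; [ring | lra | apply Gamma_pos; auto; lra].
Qed.

Lemma derivable_pt_lim_ln_Gamma_pochhammer (G : R -> R) (x dG : R) (n : nat) :
  0 < x -> 0 < G x -> derivable_pt_lim G x dG ->
  derivable_pt_lim (fun z => ln (G z) + ln_pochhammer z n) x (dG / G x + harmonic_shift x n).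
Proof.
  intros Hx HGx HD. induction n as [|n IH]; simpl ln_pochhammer; simpl harmonic_shift.
  - replace (dG / G x + 0) with (/ G x * dG) by (field; lra).
    apply (derivable_pt_lim_ext (fun z => ln (G z))); [intros; ring|].
    apply (derivable_pt_lim_comp G ln); [exact HD | now apply derivable_pt_lim_ln].
  - rewrite <- Rplus_assoc.
    apply (derivable_pt_lim_ext (fun z => (ln (G z) + ln_pochhammer z n) + ln (z + INR n)));
      [intros; ring|].
    apply derivable_pt_lim_plus; [exact IH|].
    pose proof (pos_INR n). apply is_derive_Reals. auto_derive; [lra | field; lra].
Qed.

Lemma ln_Gamma_increment_bounds (G : R -> R) (y h : R) :
  is_Gamma G -> 1 < y -> 0 < h < 1 ->
  h * ln (y - 1) <= ln (G (y + h)) - ln (G y) <= h * ln y.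
Proof.
  intros HG Hy Hh.
  assert (Hsucc : forall z, 0 < z -> ln (G (z + 1)) = ln z + ln (G z)).
  { intros z Hz. rewrite Gamma_succ by assumption. apply ln_mult; [lra | now apply Gamma_pos]. }
  split.
  - (* log-convexity on [y - 1, y, y + h], with [y] the [h / (1 + h)]-mixture of the ends *)
    pose proof (ln_Gamma_convex G (y - 1) (y + h) (h / (1 + h)) HG ltac:(lra) ltac:(lra)) as Hc.
    assert (Hth : 0 <= h / (1 + h) <= 1).
    { split; [apply Rdiv_le_0_compat; lra|].
      apply (Rmult_le_reg_r (1 + h)); [lra|]. field_simplify; lra. }
    specialize (Hc Hth).
    replace (h / (1 + h) * (y - 1) + (1 - h / (1 + h)) * (y + h)) with y in Hc by (field; lra).
    pose proof (Hsucc (y - 1) ltac:(lra)) as Hy1. replace (y - 1 + 1) with y in Hy1 by ring.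
    rewrite Hy1 in Hc |- *.
    apply (Rmult_le_compat_l (1 + h)) in Hc; [|lra].
    replace ((1 + h) * (h / (1 + h) * ln (G (y - 1)) + (1 - h / (1 + h)) * ln (G (y + h))))
      with (h * ln (G (y - 1)) + ln (G (y + h))) in Hc by (field; lra).
    nra.
  - pose proof (ln_Gamma_convex G (y + 1) y h HG ltac:(lra) ltac:(lra) ltac:(lra)) as Hc.
    replace (h * (y + 1) + (1 - h) * y) with (y + h) in Hc by ring.
    rewrite Hsucc in Hc by lra. nra.
Qed.

Lemma derivable_pt_lim_slope_bounds (f : R -> R) (x l m M : R) :
  derivable_pt_lim f x l ->
  (forall h, 0 < h < 1 -> m <= (f (x + h) - f x) / h <= M) -> m <= l <= M.
Proof.
  intros Hf Hslope.
  assert (Hnear : forall eps, 0 < eps -> exists h, 0 < h < 1 /\ Rabs ((f (x + h) - f x) / h - l) < eps).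
  { intros eps Heps. destruct (Hf eps Heps) as [del Hdel].
    pose proof (cond_pos del). pose proof (Rmin_l del 1). pose proof (Rmin_r del 1).
    assert (0 < Rmin del 1) by (apply Rmin_glb_lt; lra).
    exists (Rmin del 1 / 2). split; [lra|].
    apply Hdel; [lra | rewrite Rabs_pos_eq; lra]. }
  split; apply le_epsilon; intros eps Heps; destruct (Hnear eps Heps) as [h [Hh Hl]];
    apply Rabs_def2 in Hl; pose proof (Hslope h Hh); lra.
Qed.

Lemma digamma_bounds (G : R -> R) (beta dG : R) (n : nat) :
  is_Gamma G -> 0 < beta -> derivable_pt_lim G (1 + beta) dG ->
  ln (beta + INR n) <= dG / G (1 + beta) + harmonic_shift (1 + beta) n <= ln (1 + beta + INR n).
Proof.
  intros HG Hb HD. pose proof (pos_INR n).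
  apply (derivable_pt_lim_slope_bounds (fun z => ln (G z) + ln_pochhammer z n) (1 + beta)).
  { apply derivable_pt_lim_ln_Gamma_pochhammer; [lra | apply Gamma_pos; auto; lra | exact HD]. }
  intros h Hh. rewrite <- !ln_Gamma_add_nat by (auto; lra).
  replace (1 + beta + h + INR n) with (1 + beta + INR n + h) by ring.
  replace (beta + INR n) with (1 + beta + INR n - 1) by ring.
  destruct (ln_Gamma_increment_bounds G (1 + beta + INR n) h HG ltac:(lra) Hh).
  split; [apply Rle_div_r | apply Rle_div_l]; lra.
Qed.

(** * The digamma series *)

Definition digamma_term (beta : R) (n : nat) : R := / (INR n + 1) - / (INR n + 1 + beta).

Lemma is_lim_seq_inv_add (c : R) : 0 < c -> is_lim_seq (fun n => / (INR n + c)) 0.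
Proof.
  intros Hc. replace (Finite 0) with (Rbar_inv p_infty) by reflexivity.
  apply is_lim_seq_inv; [|discriminate].
  apply (is_lim_seq_plus _ _ p_infty c); [exact is_lim_seq_INR | apply is_lim_seq_const | reflexivity].
Qed.

Lemma sum_digamma_term (beta : R) (n : nat) :
  sum_f_R0 (digamma_term beta) n
  = sum_f_R0 (fun k => / INR (S k)) n - harmonic_shift (1 + beta) (S n).
Proof.
  induction n as [|n IH].
  - cbn [sum_f_R0 harmonic_shift]. unfold digamma_term. simpl INR.
    rewrite !Rplus_0_l, Rplus_0_r. ring.
  - rewrite !tech5, IH. cbn [harmonic_shift]. unfold digamma_term.
    rewrite (S_INR (S n)). replace (1 + beta + INR (S n)) with (INR (S n) + 1 + beta) by ring. ring.
Qed.

Lemma digamma_series (G : R -> R) (beta dG g : R) :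
  is_Gamma G -> 0 < beta -> derivable_pt_lim G (1 + beta) dG -> is_euler_gamma g ->
  is_series (digamma_term beta) (dG / G (1 + beta) + g).
Proof.
  intros HG Hb HD Hg.
  set (psi := dG / G (1 + beta)).
  set (err := fun n => psi + harmonic_shift (1 + beta) (S n) - ln (INR n + 1)).
  (* [digamma_bounds] squeezes [err n] between [0] and [(beta + 1) / (n + 1)] *)
  assert (Herr : is_lim_seq err 0).
  { apply (is_lim_seq_le_le (fun _ => 0) _ (fun n => (beta + 1) * / (INR n + 1))).
    - intros n. pose proof (pos_INR n).
      destruct (digamma_bounds G beta dG (S n) HG Hb HD) as [Hlo Hhi].
      rewrite S_INR in Hlo, Hhi. fold psi in Hlo, Hhi. unfold err. split.
      + assert (ln (INR n + 1) <= ln (beta + (INR n + 1))) by (apply ln_le; lra). lra.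
      + assert (ln (1 + beta + (INR n + 1)) - ln (INR n + 1) <= (beta + 1) * / (INR n + 1)).
        { rewrite <- ln_div by lra.
          pose proof (exp_ineq1_le (ln ((1 + beta + (INR n + 1)) / (INR n + 1)))) as Hln.
          rewrite exp_ln in Hln by (apply Rdiv_lt_0_compat; lra).
          replace ((beta + 1) * / (INR n + 1)) with ((1 + beta + (INR n + 1)) / (INR n + 1) - 1)
            by (field; lra). lra. }
        lra.
    - apply is_lim_seq_const.
    - replace (Finite 0) with (Rbar_mult (beta + 1) 0) by (simpl; f_equal; ring).
      apply is_lim_seq_scal_l, is_lim_seq_inv_add; lra. }
  apply is_lim_seq_Reals in Hg.
  apply is_series_Reals, is_lim_seq_Reals.
  apply (is_lim_seq_ext (fun n => (sum_f_R0 (fun k => / INR (S k)) n - ln (INR (S n))) + (psi - err n))).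
  { intros n. rewrite sum_digamma_term, S_INR. unfold err. ring. }
  replace (psi + g) with (g + (psi - 0)) by ring.
  apply is_lim_seq_plus'; [exact Hg|].
  apply is_lim_seq_minus'; [apply is_lim_seq_const | exact Herr].
Qed.

(** * Power series *)

Lemma CV_radius_gt_of_bounded (a : nat -> R) (y : R) :
  (forall n, Rabs (a n) <= 1) -> Rabs y < 1 -> Rbar_lt (Rabs y) (CV_radius a).
Proof.
  intros Ha Hy.
  assert (H1 : Rbar_le 1 (CV_radius a)).
  { apply (proj1 (CV_radius_bounded a)). exists 1. intros n. rewrite pow1, Rmult_1_r. apply Ha. }
  destruct (CV_radius a) as [r| |]; simpl in *; auto; lra.
Qed.

Lemma is_series_PSeries (a : nat -> R) (y : R) :
  Rbar_lt (Rabs y) (CV_radius a) -> is_series (fun n => a n * y ^ n) (PSeries a y).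
Proof. intros H. apply Series_correct, ex_series_Rabs, CV_disk_inside, H. Qed.

Lemma is_series_PSeries_derive_mul (a : nat -> R) (y : R) :
  Rbar_lt (Rabs y) (CV_radius a) ->
  is_series (fun n => INR n * a n * y ^ n) (y * PSeries (PS_derive a) y).
Proof.
  intros H.
  assert (H' : Rbar_lt (Rabs y) (CV_radius (PS_derive a))) by (now rewrite CV_radius_derive).
  apply is_series_decr_1.
  match goal with |- is_series _ ?l => replace l with (y * PSeries (PS_derive a) y)
    by (unfold plus, opp; simpl; ring) end.
  pose proof (is_series_scal y _ _ (is_series_PSeries _ _ H')) as Hs.
  change (scal y (PSeries (PS_derive a) y)) with (y * PSeries (PS_derive a) y) in Hs.
  eapply is_series_ext; [| exact Hs].
  intros n. unfold scal, PS_derive; simpl; unfold mult; simpl. ring.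
Qed.

Lemma is_derive_PSeries_bounded (a : nat -> R) (y : R) :
  (forall n, Rabs (a n) <= 1) -> Rabs y < 1 -> is_derive (PSeries a) y (PSeries (PS_derive a) y).
Proof. intros Ha Hy. apply is_derive_PSeries, CV_radius_gt_of_bounded; assumption. Qed.

Definition lerch_coeff (beta : R) (n : nat) : R := / (INR n + 1 + beta).

Lemma lerch_coeff_bound (beta : R) (n : nat) : 0 < beta -> Rabs (lerch_coeff beta n) <= 1.
Proof.
  intros Hb. unfold lerch_coeff. pose proof (pos_INR n).
  rewrite Rabs_pos_eq by (left; apply Rinv_0_lt_compat; lra).
  rewrite <- Rinv_1. apply Rinv_le_contravar; lra.
Qed.

Lemma digamma_term_nonneg (beta : R) (n : nat) : 0 < beta -> 0 <= digamma_term beta n.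
Proof.
  intros Hb. unfold digamma_term. pose proof (pos_INR n).
  assert (/ (INR n + 1 + beta) <= / (INR n + 1)) by (apply Rinv_le_contravar; lra). lra.
Qed.

Lemma digamma_term_bound (beta : R) (n : nat) : 0 < beta -> Rabs (digamma_term beta n) <= 1.
Proof.
  intros Hb. pose proof (digamma_term_nonneg beta n Hb). pose proof (pos_INR n).
  rewrite Rabs_pos_eq by assumption. unfold digamma_term in *.
  assert (/ (INR n + 1) <= 1) by (rewrite <- Rinv_1; apply Rinv_le_contravar; lra).
  assert (0 < / (INR n + 1 + beta)) by (apply Rinv_0_lt_compat; lra). lra.
Qed.

Lemma lerch_PSeries_ode (beta y : R) : 0 < beta -> Rabs y < 1 ->
  y * PSeries (PS_derive (lerch_coeff beta)) y + (1 + beta) * PSeries (lerch_coeff beta) y = / (1 - y).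
Proof.
  intros Hb Hy.
  assert (Hr : Rbar_lt (Rabs y) (CV_radius (lerch_coeff beta)))
    by (apply CV_radius_gt_of_bounded; [intros; now apply lerch_coeff_bound | exact Hy]).
  pose proof (is_series_plus _ _ _ _ (is_series_PSeries_derive_mul _ _ Hr)
    (is_series_scal (1 + beta) _ _ (is_series_PSeries _ _ Hr))) as Hsum.
  rewrite <- (is_series_unique _ _ (is_series_geom y Hy)).
  transitivity (Series (fun n => plus (INR n * lerch_coeff beta n * y ^ n)
                                      (scal (1 + beta) (lerch_coeff beta n * y ^ n)))).
  - symmetry. apply is_series_unique, Hsum.
  - apply Series_ext. intros n. unfold plus, scal, lerch_coeff; simpl; unfold mult; simpl.
    pose proof (pos_INR n). field. lra.
Qed.

Lemma digamma_PSeries_ode (beta y : R) : 0 < beta -> Rabs y < 1 ->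
  PSeries (digamma_term beta) y + y * PSeries (PS_derive (digamma_term beta)) y
  = beta * PSeries (lerch_coeff beta) y.
Proof.
  intros Hb Hy.
  assert (Hr : Rbar_lt (Rabs y) (CV_radius (digamma_term beta)))
    by (apply CV_radius_gt_of_bounded; [intros; now apply digamma_term_bound | exact Hy]).
  assert (Hr' : Rbar_lt (Rabs y) (CV_radius (lerch_coeff beta)))
    by (apply CV_radius_gt_of_bounded; [intros; now apply lerch_coeff_bound | exact Hy]).
  pose proof (is_series_plus _ _ _ _ (is_series_PSeries _ _ Hr) (is_series_PSeries_derive_mul _ _ Hr))
    as Hsum.
  pose proof (is_series_scal beta _ _ (is_series_PSeries _ _ Hr')) as Hscal.
  transitivity (Series (fun n => plus (digamma_term beta n * y ^ n)
                                      (INR n * digamma_term beta n * y ^ n))).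
  { symmetry. apply is_series_unique, Hsum. }
  transitivity (Series (fun n => scal beta (lerch_coeff beta n * y ^ n))).
  2: { apply is_series_unique, Hscal. }
  apply Series_ext. intros n. unfold plus, scal, lerch_coeff, digamma_term; simpl; unfold mult; simpl.
  pose proof (pos_INR n). field. lra.
Qed.

Lemma ln_one_minus_PSeries (beta t : R) : 0 < beta -> 0 <= t < 1 ->
  - ln (1 - t) - t * PSeries (lerch_coeff beta) t = t * PSeries (digamma_term beta) t.
Proof.
  intros Hb Ht.
  set (D := fun z => - ln (1 - z) - z * PSeries (lerch_coeff beta) z
                     - z * PSeries (digamma_term beta) z).
  (* the two series ODEs make [D'] vanish on [0, 1) *)
  assert (HD : forall z, 0 <= z <= t -> derivable_pt_lim D z 0).
  { intros z Hz. apply is_derive_Reals.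
    assert (Hz1 : Rabs z < 1) by (rewrite Rabs_pos_eq; lra).
    pose proof (is_derive_PSeries_bounded _ z (fun n => lerch_coeff_bound beta n Hb) Hz1) as DP.
    pose proof (is_derive_PSeries_bounded _ z (fun n => digamma_term_bound beta n Hb) Hz1) as DQ.
    unfold D. auto_derive.
    - repeat split; try lra; eexists; eauto.
    - replace (Derive (fun x => PSeries (lerch_coeff beta) x) z)
        with (PSeries (PS_derive (lerch_coeff beta)) z) by (symmetry; now apply is_derive_unique).
      replace (Derive (fun x => PSeries (digamma_term beta) x) z)
        with (PSeries (PS_derive (digamma_term beta)) z) by (symmetry; now apply is_derive_unique).
      pose proof (lerch_PSeries_ode beta z Hb Hz1). pose proof (digamma_PSeries_ode beta z Hb Hz1).
      replace (1 + - z) with (1 - z) by ring. lra. }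
  destruct (Req_dec t 0) as [->|Ht0].
  - rewrite Rminus_0_r, ln_1. ring.
  - destruct (MVT_cor3 D (fun _ => 0) 0 t ltac:(lra) ltac:(intros; apply HD; lra)) as [c [_ [_ Hc]]].
    unfold D in Hc. rewrite Rminus_0_r, ln_1 in Hc. lra.
Qed.

Lemma digamma_term_eq (beta : R) (n : nat) :
  0 < beta -> digamma_term beta n = beta / ((INR n + 1) * (INR n + 1 + beta)).
Proof. intros Hb. unfold digamma_term. pose proof (pos_INR n). field. lra. Qed.

Lemma CV_radius_digamma_term (beta : R) : 0 < beta -> CV_radius (digamma_term beta) = 1.
Proof.
  intros Hb. rewrite <- Rinv_1. apply CV_radius_finite_DAlembert; [| lra |].
  { intros n. rewrite digamma_term_eq by exact Hb. pose proof (pos_INR n).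
    apply Rgt_not_eq, Rdiv_lt_0_compat; [lra | apply Rmult_lt_0_compat; lra]. }
  apply (is_lim_seq_ext (fun n => (1 - / (INR n + 2)) * (1 - / (INR n + (2 + beta))))).
  { intros n. rewrite !digamma_term_eq, S_INR by exact Hb. pose proof (pos_INR n).
    rewrite <- Rplus_assoc, Rabs_pos_eq.
    - field. repeat split; lra.
    - apply Rle_div_r; [apply Rdiv_lt_0_compat; [lra | apply Rmult_lt_0_compat; lra]|].
      rewrite Rmult_0_l. apply Rlt_le, Rdiv_lt_0_compat; [lra | apply Rmult_lt_0_compat; lra]. }
  replace (Finite 1) with (Finite ((1 - 0) * (1 - 0))) by (f_equal; ring).
  apply is_lim_seq_mult'; apply is_lim_seq_minus'; try apply is_lim_seq_const;
    apply is_lim_seq_inv_add; lra.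
Qed.

Lemma filterlim_digamma_PSeries_at_left_1 (G : R -> R) (beta dG g : R) :
  is_Gamma G -> 0 < beta -> derivable_pt_lim G (1 + beta) dG -> is_euler_gamma g ->
  filterlim (PSeries (digamma_term beta)) (at_left 1) (locally (dG / G (1 + beta) + g)).
Proof.
  intros HG Hb HD Hg.
  pose proof (digamma_series G beta dG g HG Hb HD Hg) as Hs.
  assert (Hs1 : is_pseries (digamma_term beta) 1 (dG / G (1 + beta) + g)).
  { eapply is_series_ext; [| exact Hs]. intros n. rewrite pow_n_pow, pow1.
    unfold scal; simpl; unfold mult; simpl. ring. }
  pose proof (Abel (digamma_term beta)) as HAbel. rewrite CV_radius_digamma_term in HAbel by exact Hb.
  simpl in HAbel. rewrite (is_pseries_unique _ _ _ Hs1) in HAbel.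
  apply HAbel; [simpl; lra | exact I | now exists (dG / G (1 + beta) + g)].
Qed.

Lemma is_Lerch_half (beta Phi : R) :
  0 < beta -> is_Lerch (1 / 2) 1 beta Phi -> Phi = / beta + / 2 * PSeries (lerch_coeff beta) (/ 2).
Proof.
  intros Hb HPhi. apply is_series_Reals in HPhi.
  set (u := fun n => (1 / 2) ^ n / Rpower (INR n + beta) 1) in HPhi.
  assert (Hu0 : u 0%nat = / beta) by (unfold u; simpl; rewrite Rpower_1 by lra; field; lra).
  assert (Hr : Rbar_lt (Rabs (/ 2)) (CV_radius (lerch_coeff beta))).
  { apply CV_radius_gt_of_bounded; [intros; now apply lerch_coeff_bound|].
    rewrite Rabs_pos_eq; lra. }
  assert (Htail : is_series (fun n => u (S n)) (/ 2 * PSeries (lerch_coeff beta) (/ 2))).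
  { eapply is_series_ext; [| exact (is_series_scal (/ 2) _ _ (is_series_PSeries _ _ Hr))].
    intros n. change (/ 2 * (lerch_coeff beta n * (/ 2) ^ n) = u (S n)).
    unfold u, lerch_coeff. pose proof (pos_INR n).
    rewrite S_INR, Rpower_1, <- tech_pow_Rmult by lra. replace (1 / 2) with (/ 2) by field.
    field. lra. }
  assert (Hfull : is_series u (/ beta + / 2 * PSeries (lerch_coeff beta) (/ 2))).
  { apply is_series_decr_1.
    match goal with |- is_series _ ?l => replace l with (/ 2 * PSeries (lerch_coeff beta) (/ 2))
      by (unfold plus, opp; simpl; rewrite Hu0; ring) end.
    exact Htail. }
  rewrite <- (is_series_unique _ _ HPhi). apply is_series_unique, Hfull.
Qed.

(** * The logarithmic moment of ECR *)

Definition CR_cdf (l x : R) : R := 1 - l / sqrt (l ^ 2 + x ^ 2).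

Definition CR_pdf (l x : R) : R := l * x / ((l ^ 2 + x ^ 2) * sqrt (l ^ 2 + x ^ 2)).

Definition ECR_pdf (beta l x : R) : R := beta * Rpower (CR_cdf l x) (beta - 1) * CR_pdf l x.

Lemma sqrt_sum_sq_gt (l x : R) : 0 < l -> 0 < x ->
  l < sqrt (l ^ 2 + x ^ 2) /\ x < sqrt (l ^ 2 + x ^ 2).
Proof.
  intros Hl Hx. rewrite <- (sqrt_pow2 l) at 1 by lra. rewrite <- (sqrt_pow2 x) at 2 by lra.
  split; apply sqrt_lt_1_alt; nra.
Qed.

Lemma CR_cdf_bounds (l x : R) : 0 < l -> 0 < x -> 0 < CR_cdf l x < 1.
Proof.
  intros Hl Hx. unfold CR_cdf. destruct (sqrt_sum_sq_gt l x Hl Hx) as [Hlt _].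
  assert (0 < l / sqrt (l ^ 2 + x ^ 2) < 1) by (split; [apply Rdiv_lt_0_compat | apply Rlt_div_l]; lra).
  lra.
Qed.

Lemma is_derive_CR_cdf (l x : R) : 0 < l -> is_derive (CR_cdf l) x (CR_pdf l x).
Proof.
  intros Hl. assert (Hpos : 0 < l ^ 2 + x ^ 2) by nra.
  pose proof (sqrt_sqrt _ (Rlt_le _ _ Hpos)). pose proof (sqrt_lt_R0 _ Hpos).
  unfold CR_cdf, CR_pdf. auto_derive.
  - replace (l * (l * 1) + x * (x * 1)) with (l ^ 2 + x ^ 2) by ring. repeat split; lra.
  - replace (l * (l * 1) + x * (x * 1)) with (l ^ 2 + x ^ 2) by ring. rewrite H. field. lra.
Qed.

Lemma is_derive_ECR_cdf (beta l x : R) :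
  0 < l -> 0 < x -> is_derive (ECR_cdf beta l) x (ECR_pdf beta l x).
Proof.
  intros Hl Hx. pose proof (CR_cdf_bounds l x Hl Hx). pose proof (is_derive_CR_cdf l x Hl) as HT.
  apply (is_derive_ext (fun z => exp (beta * ln (CR_cdf l z)))); [reflexivity|].
  auto_derive; [repeat split; [eexists; exact HT | lra]|].
  replace (Derive (fun x => CR_cdf l x) x) with (CR_pdf l x) by (symmetry; now apply is_derive_unique).
  unfold ECR_pdf, Rpower.
  replace ((beta - 1) * ln (CR_cdf l x)) with (beta * ln (CR_cdf l x) + - ln (CR_cdf l x)) by ring.
  rewrite exp_plus, (exp_Ropp (ln _)), exp_ln by lra. field. lra.
Qed.

(* logarithm of the Cauchy-Rayleigh quantile [l sqrt (t (2 - t)) / (1 - t)] *)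
Definition ln_CR_quantile (l t : R) : R := ln l + / 2 * ln t + / 2 * ln (2 - t) - ln (1 - t).

Lemma ln_CR_quantile_cdf (l x : R) : 0 < l -> 0 < x -> ln_CR_quantile l (CR_cdf l x) = ln x.
Proof.
  intros Hl Hx. destruct (sqrt_sum_sq_gt l x Hl Hx) as [Hls Hxs].
  pose proof (sqrt_sqrt (l ^ 2 + x ^ 2) ltac:(nra)) as Hsq.
  pose proof (CR_cdf_bounds l x Hl Hx) as HT.
  unfold ln_CR_quantile. unfold CR_cdf in *. set (s := sqrt (l ^ 2 + x ^ 2)) in *.
  assert (Hprod : (1 - l / s) * (2 - (1 - l / s)) = (x / s) * (x / s)).
  { replace ((1 - l / s) * (2 - (1 - l / s))) with ((s * s - l * l) / (s * s)) by (field; lra).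
    replace (x / s * (x / s)) with (x * x / (s * s)) by (field; lra). rewrite Hsq. field. nra. }
  assert (Hln : ln (1 - l / s) + ln (2 - (1 - l / s)) = 2 * (ln x - ln s)).
  { rewrite <- ln_mult, Hprod, ln_mult, ln_div by (try apply Rdiv_lt_0_compat; lra). ring. }
  replace (1 - (1 - l / s)) with (l / s) by ring. rewrite ln_div by lra. lra.
Qed.

(* Integrating [ln (2 - t)] and [ln (1 - t)] by parts against [beta t^(beta-1)] produces
   the [t^(beta+1) P(t/2)] and [t^(beta+1) P(t)] terms, by [lerch_PSeries_ode]. *)
Definition log_moment_primitive (beta l t : R) : R :=
  Rpower t beta * (ln l - / (2 * beta) + / 2 * ln t + / 2 * ln (2 - t) - ln (1 - t)
    - t * PSeries (lerch_coeff beta) t + / 4 * (t * PSeries (lerch_coeff beta) (t / 2))).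

Lemma is_derive_log_moment_primitive (beta l t : R) : 0 < beta -> 0 < t < 1 ->
  is_derive (log_moment_primitive beta l) t (beta * Rpower t (beta - 1) * ln_CR_quantile l t).
Proof.
  intros Hb Ht.
  assert (HP : forall y, 0 < y < 1 -> is_derive (PSeries (lerch_coeff beta)) y
     ((/ (1 - y) - (1 + beta) * PSeries (lerch_coeff beta) y) / y)).
  { intros y Hy. assert (Hy1 : Rabs y < 1) by (rewrite Rabs_pos_eq; lra).
    replace ((/ (1 - y) - (1 + beta) * PSeries (lerch_coeff beta) y) / y)
      with (PSeries (PS_derive (lerch_coeff beta)) y)
      by (rewrite <- (lerch_PSeries_ode beta y Hb Hy1); field; lra).
    apply is_derive_PSeries_bounded; [intros; now apply lerch_coeff_bound | exact Hy1]. }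
  pose proof (HP t Ht) as D1. pose proof (HP (t / 2) ltac:(lra)) as D2.
  unfold log_moment_primitive, Rpower. auto_derive.
  - repeat split; try lra; eexists; eauto.
  - replace (Derive (fun x => PSeries (lerch_coeff beta) x) t) with
      ((/ (1 - t) - (1 + beta) * PSeries (lerch_coeff beta) t) / t)
      by (symmetry; now apply is_derive_unique).
    replace (Derive (fun x => PSeries (lerch_coeff beta) x) (t * / 2)) with
      ((/ (1 - t / 2) - (1 + beta) * PSeries (lerch_coeff beta) (t / 2)) / (t / 2))
      by (symmetry; now apply is_derive_unique).
    replace ((beta - 1) * ln t) with (beta * ln t + - ln t) by ring.
    rewrite exp_plus, (exp_Ropp (ln t)), exp_ln by lra.
    replace (t * / 2) with (t / 2) by reflexivity. unfold ln_CR_quantile, Rminus. field. lra.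
Qed.

Lemma filterlim_log_moment_primitive_0 (beta l : R) : 0 < beta ->
  filterlim (log_moment_primitive beta l) (at_right 0) (locally 0).
Proof.
  intros Hb.
  set (X := fun t => ln l - / (2 * beta) + / 2 * ln (2 - t) - ln (1 - t)
    - t * PSeries (lerch_coeff beta) t + / 4 * (t * PSeries (lerch_coeff beta) (t / 2))).
  apply (filterlim_ext (fun t => Rpower t beta * X t + / 2 * (Rpower t beta * ln t))).
  { intros t. unfold log_moment_primitive, X. ring. }
  replace (locally 0) with (locally (0 * X 0 + / 2 * 0)) by (f_equal; ring).
  apply filterlim_Rplus_locally.
  - apply filterlim_Rmult_locally; [now apply filterlim_Rpower_0|].
    apply filterlim_within_continuous, (ex_derive_continuous (V:=R_NormedModule)).
    assert (HP0 : forall y, Rabs y < 1 -> ex_derive (PSeries (lerch_coeff beta)) y).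
    { intros y Hy. eexists.
      apply is_derive_PSeries_bounded; [intros; now apply lerch_coeff_bound | exact Hy]. }
    unfold X. auto_derive. repeat split; try lra; apply HP0; rewrite ?Rmult_0_l, Rabs_R0; lra.
  - replace (locally (/ 2 * 0)) with (locally (scal (/ 2) 0)) by reflexivity.
    eapply filterlim_comp; [now apply filterlim_Rpower_mul_ln_0 |].
    exact (filterlim_scal_r (K:=R_AbsRing) (V:=R_NormedModule) (/ 2) 0).
Qed.

Lemma filterlim_log_moment_primitive_1 (beta l S : R) : 0 < beta ->
  filterlim (PSeries (digamma_term beta)) (at_left 1) (locally S) ->
  filterlim (log_moment_primitive beta l) (at_left 1)
    (locally (ln l - / (2 * beta) + / 4 * PSeries (lerch_coeff beta) (/ 2) + S)).
Proof.
  intros Hb HS.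
  set (c := fun t => / 2 * ln t + / 2 * ln (2 - t) + / 4 * (t * PSeries (lerch_coeff beta) (t / 2))).
  (* the singular part [- ln (1 - t) - t P(t)] is the power series [t Q(t)] *)
  apply (filterlim_ext_loc (fun t => Rpower t beta
           * ((ln l - / (2 * beta) + c t) + t * PSeries (digamma_term beta) t))).
  { generalize at_left_1_unit. apply filter_imp. intros t Ht.
    rewrite <- ln_one_minus_PSeries by lra. unfold log_moment_primitive, c. ring. }
  assert (Hc1 : c 1 = / 4 * PSeries (lerch_coeff beta) (/ 2)).
  { unfold c. replace (2 - 1) with 1 by ring. rewrite ln_1. replace (1 / 2) with (/ 2) by field. ring. }
  assert (Hp1 : Rpower 1 beta = 1) by (unfold Rpower; rewrite ln_1, Rmult_0_r; apply exp_0).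
  replace (ln l - / (2 * beta) + / 4 * PSeries (lerch_coeff beta) (/ 2) + S)
    with (Rpower 1 beta * ((ln l - / (2 * beta) + c 1) + 1 * S)) by (rewrite Hp1, Hc1; ring).
  assert (Hcont : forall h : R -> R, ex_derive h 1 -> filterlim h (at_left 1) (locally (h 1)))
    by (intros h Hh; apply filterlim_within_continuous, (ex_derive_continuous (V:=R_NormedModule)), Hh).
  apply filterlim_Rmult_locally; [apply Hcont; unfold Rpower; auto_derive; lra|].
  apply filterlim_Rplus_locally.
  - apply (Hcont (fun t => ln l - / (2 * beta) + c t)). unfold c. auto_derive.
    repeat split; try lra. eexists. apply is_derive_PSeries_bounded;
      [intros; now apply lerch_coeff_bound | rewrite Rabs_pos_eq; lra].
  - apply filterlim_Rmult_locally; [apply (Hcont (fun t => t)); auto_derive; auto | exact HS].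
Qed.

Lemma filterlim_CR_cdf_0 (l : R) : 0 < l -> filterlim (CR_cdf l) (at_right 0) (at_right 0).
Proof.
  intros Hl. apply filterlim_locally_within.
  - replace (locally 0) with (locally (CR_cdf l 0)).
    + apply filterlim_within_continuous, (ex_derive_continuous (V:=R_NormedModule)).
      eexists. now apply is_derive_CR_cdf.
    + f_equal. unfold CR_cdf. replace (l ^ 2 + 0 ^ 2) with (l ^ 2) by ring.
      rewrite sqrt_pow2 by lra. field. lra.
  - generalize at_right_0_pos. apply filter_imp. intros x Hx. now apply CR_cdf_bounds.
Qed.

Lemma filterlim_CR_cdf_p_infty (l : R) :
  0 < l -> filterlim (CR_cdf l) (Rbar_locally p_infty) (at_left 1).
Proof.
  intros Hl. apply filterlim_locally_within.
  - apply filterlim_locally. intros eps. exists (l / eps). intros x Hx.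
    pose proof (cond_pos eps) as Heps.
    assert (Hx0 : 0 < x) by (apply (Rlt_trans _ (l / eps)); [apply Rdiv_lt_0_compat|]; lra).
    destruct (sqrt_sum_sq_gt l x Hl Hx0) as [_ Hxs].
    assert (l / sqrt (l ^ 2 + x ^ 2) < l / x)
      by (apply Rmult_lt_compat_l; [lra | apply Rinv_lt_contravar; nra]).
    assert (l / x < eps)
      by (apply Rlt_div_l; [lra|]; rewrite Rmult_comm; apply Rlt_div_l; lra).
    pose proof (CR_cdf_bounds l x Hl Hx0).
    change (Rabs (CR_cdf l x - 1) < eps). unfold CR_cdf in *. rewrite Rabs_left; lra.
  - exists 0. intros x Hx. now apply CR_cdf_bounds.
Qed.

Lemma is_derive_log_moment_primitive_CR_cdf (beta l x : R) : 0 < beta -> 0 < l -> 0 < x ->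
  is_derive (fun z => log_moment_primitive beta l (CR_cdf l z)) x (ln x * ECR_pdf beta l x).
Proof.
  intros Hb Hl Hx.
  replace (ln x * ECR_pdf beta l x) with
    (CR_pdf l x * (beta * Rpower (CR_cdf l x) (beta - 1) * ln_CR_quantile l (CR_cdf l x)))
    by (rewrite ln_CR_quantile_cdf by assumption; unfold ECR_pdf; ring).
  apply (is_derive_comp (log_moment_primitive beta l) (CR_cdf l)).
  - apply is_derive_log_moment_primitive; [exact Hb | now apply CR_cdf_bounds].
  - now apply is_derive_CR_cdf.
Qed.

Lemma ln_mul_ECR_pdf_continuous (beta l x : R) : 0 < l -> 0 < x ->
  continuous (fun z => ln z * ECR_pdf beta l z) x.
Proof.
  intros Hl Hx. pose proof (CR_cdf_bounds l x Hl Hx).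
  apply (ex_derive_continuous (V:=R_NormedModule)).
  assert (Hpos : 0 < l ^ 2 + x ^ 2) by nra. pose proof (sqrt_lt_R0 _ Hpos).
  unfold ECR_pdf, Rpower. auto_derive. repeat split; try lra.
  - eexists. now apply is_derive_CR_cdf.
  - unfold CR_pdf. auto_derive. replace (l * (l * 1) + x * (x * 1)) with (l ^ 2 + x ^ 2) by ring.
    repeat split; try lra. apply Rgt_not_eq, Rmult_lt_0_compat; lra.
Qed.

Lemma is_RInt_0_oo_ln_mul_ECR_pdf (G : R -> R) (beta l dG g : R) :
  is_Gamma G -> 0 < beta -> 0 < l -> derivable_pt_lim G (1 + beta) dG -> is_euler_gamma g ->
  is_RInt_0_oo (fun x => ln x * ECR_pdf beta l x)
    (ln l - / (2 * beta) + / 4 * PSeries (lerch_coeff beta) (/ 2) + (dG / G (1 + beta) + g)).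
Proof.
  intros HG Hb Hl HD Hg. rewrite <- Rminus_0_r.
  apply (is_RInt_0_oo_derive (fun x => log_moment_primitive beta l (CR_cdf l x))).
  - intros x Hx. now apply is_derive_log_moment_primitive_CR_cdf.
  - intros x Hx. now apply ln_mul_ECR_pdf_continuous.
  - eapply filterlim_comp; [now apply filterlim_CR_cdf_0 | now apply filterlim_log_moment_primitive_0].
  - eapply filterlim_comp; [now apply filterlim_CR_cdf_p_infty |].
    apply filterlim_log_moment_primitive_1; [exact Hb|].
    now apply filterlim_digamma_PSeries_at_left_1.
Qed.

Theorem proposition6 (beta lambda : R) (hbeta : 0 < beta) (hlambda : 0 < lambda)
    (f : R -> R)
    (hf : forall x : R, 0 < x -> derivable_pt_lim (ECR_cdf beta lambda) x (f x))
    (G : R -> R) (hG : is_Gamma G) (dG : R)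
    (hdG : derivable_pt_lim G (1 + beta) dG)
    (g : R) (hg : is_euler_gamma g)
    (Phi : R) (hPhi : is_Lerch (1/2) 1 beta Phi) :
  improper_int_0_inf (fun x => ln x * f x)
    (ln lambda + (1/2) * Phi + dG / G (1 + beta) + g - 1 / beta).
Proof.
  pose proof (Gamma_pos G (1 + beta) hG ltac:(lra)).
  replace (ln lambda + (1/2) * Phi + dG / G (1 + beta) + g - 1 / beta) with
    (ln lambda - / (2 * beta) + / 4 * PSeries (lerch_coeff beta) (/ 2) + (dG / G (1 + beta) + g))
    by (rewrite (is_Lerch_half beta Phi hbeta hPhi); field; lra).
  apply is_RInt_0_oo_improper_int_0_inf.
  apply (is_RInt_gen_ext (fun x => ln x * ECR_pdf beta lambda x));
    [| now apply is_RInt_0_oo_ln_mul_ECR_pdf].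
  generalize eventually_0_oo_pos. apply filter_imp. intros ab Hab x Hx.
  assert (Hx0 : 0 < x) by (apply Hab; lra).
  f_equal. apply (uniqueness_limite (ECR_cdf beta lambda) x).
  - apply is_derive_Reals, is_derive_ECR_cdf; assumption.
  - now apply hf.
Qed.
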